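(* Let $n=2$. The map $\mathcal M:\Omega\to\mathbb R^5$, $W=(w_1,u_1,w_2,u_2,\sigma)\mapsto(M_0,\dots,M_4)^T$ with $M_j=\sum_{i=1}^2 w_i\Delta_j(u_i,\sigma)$, is injective on $\Omega=\{W\in\mathbb R^5: w_1>0,\ w_2>0,\ u_1<u_2,\ \sigma>0\}$ if and only if the kernel satisfies $\mathfrak m_4\ge 3+\frac98\mathfrak m_3^2$.
   Context: Let $\mathcal K:\mathbb R\to[0,\infty)$ be a kernel with $\mathfrak m_j:=\int_{\mathbb R}\xi^j\mathcal K(\xi)\,d\xi<\infty$ for all $j\in\mathbb N$; the kernel is assumed normalized: $\mathfrak m_0=1$, $\mathfrak m_1=0$, $\mathfrak m_2=1$. For $u\in\mathbb R$, $\sigma>0$, $\Delta_j(u,\sigma)=\int_{\mathbb R}\xi^j\frac1\sigma\mathcal K\!\left(\frac{\xi-u}{\sigma}\right)d\xi=\sum_{k=0}^j\binom jk\mathfrak m_k\sigma^ku^{j-k}$. *)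

From HB Require Import structures.
From mathcomp Require Import all_boot all_order all_algebra.
From mathcomp Require Import all_classical all_reals all_analysis.
Set Implicit Arguments. Unset Strict Implicit. Unset Printing Implicit Defensive.
Import Order.TTheory GRing.Theory Num.Theory.
Local Open Scope ring_scope.
Local Open Scope classical_set_scope.

Definition is_kernel (R : realType) (K : R -> R) : Prop :=
  (forall x, 0 <= K x) /\ measurable_fun setT K /\
  (forall j : nat, (@lebesgue_measure R).-integrable setT
                     (fun x => (x ^+ j * K x)%:E)).

Definition kmoment (R : realType) (K : R -> R) (j : nat) : R :=
  Rintegral (@lebesgue_measure R) setT (fun x => x ^+ j * K x).

Definition normalized (R : realType) (K : R -> R) : Prop :=
  kmoment K 0 = 1 /\ kmoment K 1 = 0 /\ kmoment K 2 = 1.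

(* Delta_j(u, sigma) = sum_{k=0}^j binom(j,k) m_k sigma^k u^(j-k)
   (the closed form given in the paper for the integral
    \int xi^j (1/sigma) K((xi-u)/sigma) dxi). *)
Definition Delta (R : realType) (K : R -> R) (j : nat) (u sigma : R) : R :=
  \sum_(k < j.+1) ('C(j, k))%:R * kmoment K k * sigma ^+ k * u ^+ (j - k).

Definition param (R : realType) := (R * R * R * R * R)%type.

Definition Mmap (R : realType) (K : R -> R) (W : param R) (j : nat) : R :=
  let: (w1, u1, w2, u2, s) := W in
  w1 * Delta K j u1 s + w2 * Delta K j u2 s.

Definition Omega (R : realType) (W : param R) : Prop :=
  let: (w1, u1, w2, u2, s) := W in
  0 < w1 /\ 0 < w2 /\ u1 < u2 /\ 0 < s.

Definition injective_on_Omega (R : realType) (K : R -> R) : Prop :=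
  forall W W' : param R, Omega W -> Omega W' ->
    (forall j : 'I_5, Mmap K W j = Mmap K W' j) -> W = W'.

From HB Require Import structures.
From mathcomp Require Import all_boot all_order all_algebra.
From mathcomp Require Import all_classical all_reals all_analysis.
From mathcomp Require Import ring lra.
Import Order.TTheory GRing.Theory Num.Theory.
Set Implicit Arguments. Unset Strict Implicit. Unset Printing Implicit Defensive.
Local Open Scope ring_scope.

(* The moments M_0, ..., M_4 of the mixture are equivalent data to its total weight, mean
   and cumulants k2, k3, k4.  Cumulants add under convolution, so k_j is the j-th cumulant
   of the two-point law (w_i / (w1 + w2) at u_i) plus sigma^j times that of the kernel.
   A two-point law is determined by its mean, variance v > 0 and third cumulant e, every
   such pair occurs, and its fourth cumulant is e^2/v - 2 v^2.  Hence injectivity on Omega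
   means that sigma is determined by (v + sigma^2, e + m3 sigma^3,
   e^2/v - 2 v^2 + (m4 - 3) sigma^4).  For two scales s < s' with the same k2 = A, a
   common (k3, k4) exists iff a quadratic equation in e' has a real root, i.e. iff a
   discriminant is nonnegative; since 8 X^2 <= 9 S T with X = s^2 + s s' + s'^2,
   S = s^2 + s'^2, T = (s + s')^2, and equality as s' -> s, that discriminant is negative
   for all admissible s, s', A exactly when m4 - 3 >= 9/8 m3^2. *)


Section Cumulants.
Variable R : idomainType.

(* Meaningful for [j <= 4] only. *)
Definition moment_of_cumulants (x : R) (k : R * R * R) (j : nat) : R :=
  let: (k2, k3, k4) := k in
  match j with
  | 0 => 1
  | 1 => x
  | 2 => x ^+ 2 + k2
  | 3 => x ^+ 3 + 3 * x * k2 + k3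
  | _ => x ^+ 4 + 6 * x ^+ 2 * k2 + 4 * x * k3 + 3 * k2 ^+ 2 + k4
  end.

Lemma moment_of_cumulants_inj (W W' x x' : R) (k k' : R * R * R) : W != 0 ->
    (forall j, (j < 5)%N ->
       W * moment_of_cumulants x k j = W' * moment_of_cumulants x' k' j) ->
  [/\ W = W', x = x' & k = k'].
Proof.
move: k k' => [[k2 k3] k4] [[k2' k3'] k4'] W0 eqM.
have W_eq : W = W' by have := eqM 0%N isT; rewrite /= !mulr1.
rewrite -W_eq in eqM; have {}eqM j hj := mulfI W0 (eqM j hj).
have x_eq : x = x' := eqM 1%N isT.
have k2_eq : k2 = k2' by have := eqM 2%N isT; rewrite /= x_eq => /addrI.
have k3_eq : k3 = k3' by have := eqM 3%N isT; rewrite /= x_eq k2_eq => /addrI.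
have k4_eq : k4 = k4' by have := eqM 4%N isT; rewrite /= x_eq k2_eq k3_eq => /addrI.
by rewrite x_eq k2_eq k3_eq k4_eq.
Qed.

End Cumulants.

Section TwoPoint.
Variable R : rcfType.

Definition two_point_mean (w1 u1 w2 u2 : R) : R := (w1 * u1 + w2 * u2) / (w1 + w2).
Definition two_point_var (w1 u1 w2 u2 : R) : R := w1 * w2 * (u2 - u1) ^+ 2 / (w1 + w2) ^+ 2.
Definition two_point_cum3 (w1 u1 w2 u2 : R) : R :=
  w1 * w2 * (w1 - w2) * (u2 - u1) ^+ 3 / (w1 + w2) ^+ 3.

Definition two_point_of (W x v e : R) : R * R * R * R :=
  let D := Num.sqrt (4 * v ^+ 3 + e ^+ 2) in
  (W * (D + e) / (2 * D), x - (D - e) / (2 * v),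
   W * (D - e) / (2 * D), x + (D + e) / (2 * v)).

Lemma two_point_var_gt0 (w1 u1 w2 u2 : R) : 0 < w1 -> 0 < w2 -> u1 < u2 ->
  0 < two_point_var w1 u1 w2 u2.
Proof.
move=> w10 w20 u12; rewrite /two_point_var divr_gt0 ?exprn_gt0 ?mulr_gt0 //; lra.
Qed.

Lemma two_point_ofK (w1 u1 w2 u2 : R) : 0 < w1 -> 0 < w2 -> u1 < u2 ->
  two_point_of (w1 + w2) (two_point_mean w1 u1 w2 u2) (two_point_var w1 u1 w2 u2)
    (two_point_cum3 w1 u1 w2 u2) = (w1, u1, w2, u2).
Proof.
move=> w10 w20 u12.
have W0 : w1 + w2 != 0 by rewrite lt0r_neq0 //; lra.
have d0 : u2 - u1 != 0 by rewrite lt0r_neq0 //; lra.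
have [w1_neq0 w2_neq0] : w1 != 0 /\ w2 != 0 by rewrite !lt0r_neq0.
have D_gt0 : 0 < w1 * w2 * (u2 - u1) ^+ 3 / (w1 + w2) ^+ 2.
  by rewrite divr_gt0 ?exprn_gt0 ?mulr_gt0 //; lra.
(* For a two-point law, 4 k2^3 + k3^2 is a perfect square. *)
have sqrtE : Num.sqrt (4 * two_point_var w1 u1 w2 u2 ^+ 3 + two_point_cum3 w1 u1 w2 u2 ^+ 2)
    = w1 * w2 * (u2 - u1) ^+ 3 / (w1 + w2) ^+ 2.
  rewrite -[RHS]ger0_norm ?ltW // -sqrtr_sqr; congr Num.sqrt.
  by rewrite /two_point_var /two_point_cum3; field.
rewrite /two_point_of sqrtE /two_point_mean /two_point_var /two_point_cum3.
by congr (_, _, _, _); field; rewrite ?W0 ?d0 ?w1_neq0 ?w2_neq0.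
Qed.

Lemma two_point_realize (v e : R) : 0 < v -> exists w1 u1 w2 u2,
  [/\ 0 < w1, 0 < w2 & u1 < u2] /\
  [/\ w1 + w2 = 1, two_point_mean w1 u1 w2 u2 = 0,
      two_point_var w1 u1 w2 u2 = v & two_point_cum3 w1 u1 w2 u2 = e].
Proof.
move=> v0.
have [D [D2 D0]] : exists D, D ^+ 2 = 4 * v ^+ 3 + e ^+ 2 /\ 0 < D.
  have pos : 0 < 4 * v ^+ 3 + e ^+ 2 by rewrite ltr_wpDr ?sqr_ge0 ?mulr_gt0 ?exprn_gt0.
  by exists (Num.sqrt (4 * v ^+ 3 + e ^+ 2)); rewrite sqr_sqrtr ?sqrtr_gt0 ?ltW.
have [De_gt0 De'_gt0] : 0 < D - e /\ 0 < D + e.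
  have : 0 < (D - e) * (D + e) by rewrite -subr_sqr D2 addrK mulr_gt0 ?exprn_gt0.
  by split; nra.
have [D_neq0 v_neq0] : D != 0 /\ v != 0 by rewrite !lt0r_neq0.
have W1 : (D + e) / (2 * D) + (D - e) / (2 * D) = 1 by field.
(* The components of [two_point_of 1 0 v e]. *)
exists ((D + e) / (2 * D)), (- ((D - e) / (2 * v))),
       ((D - e) / (2 * D)), ((D + e) / (2 * v)).
rewrite /two_point_mean /two_point_var /two_point_cum3 W1 !expr1n !divr1.
split; split => //.
- by rewrite divr_gt0 ?mulr_gt0.
- by rewrite divr_gt0 ?mulr_gt0.
- by apply: (@lt_trans _ _ 0); rewrite ?oppr_lt0 divr_gt0 ?mulr_gt0.
- by field; rewrite ?v_neq0 ?D_neq0.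
- transitivity ((D ^+ 2 - e ^+ 2) / (4 * v ^+ 2)); first by field; rewrite ?v_neq0 ?D_neq0.
  by rewrite D2; field; rewrite ?v_neq0 ?D_neq0.
- transitivity ((D ^+ 2 - e ^+ 2) * e / (4 * v ^+ 3)); first by field; rewrite ?v_neq0 ?D_neq0.
  by rewrite D2; field; rewrite ?v_neq0 ?D_neq0.
Qed.

(* Cumulants (k2, k3, k4) of X + s Z, where X is a two-point law with variance v and
   third cumulant e (so that k4(X) = e^2/v - 2 v^2) and Z has cumulants (1, m, c). *)
Definition mixture_cumulants (m c s v e : R) : R * R * R :=
  (v + s ^+ 2, e + m * s ^+ 3, e ^+ 2 / v - 2 * v ^+ 2 + c * s ^+ 4).

Lemma two_point_mixture_moments (m c w1 u1 w2 u2 s : R) (j : nat) :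
    0 < w1 -> 0 < w2 -> u1 < u2 -> (j < 5)%N ->
  w1 * moment_of_cumulants u1 (s ^+ 2, m * s ^+ 3, c * s ^+ 4) j
    + w2 * moment_of_cumulants u2 (s ^+ 2, m * s ^+ 3, c * s ^+ 4) j
  = (w1 + w2) * moment_of_cumulants (two_point_mean w1 u1 w2 u2)
      (mixture_cumulants m c s (two_point_var w1 u1 w2 u2) (two_point_cum3 w1 u1 w2 u2)) j.
Proof.
move=> w10 w20 u12 j5.
have W0 : w1 + w2 != 0 by rewrite lt0r_neq0 //; lra.
have d0 : u2 - u1 != 0 by rewrite lt0r_neq0 //; lra.
have [w1_neq0 w2_neq0] : w1 != 0 /\ w2 != 0 by rewrite !lt0r_neq0.
rewrite /two_point_mean /two_point_var /two_point_cum3.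
by case: j j5 => [|[|[|[|[|]]]]] //= _; field; rewrite ?W0 ?d0 ?w1_neq0 ?w2_neq0.
Qed.

End TwoPoint.

Section ScaleIdentifiability.
Variable R : rcfType.

Definition scale_identifiable (m c : R) : Prop :=
  forall s v e s' v' e' : R, 0 < s -> 0 < v -> 0 < s' -> 0 < v' ->
    mixture_cumulants m c s v e = mixture_cumulants m c s' v' e' -> s = s'.

(* Up to the factor (A - s^2) (A - s'^2) (s' - s)^2, the discriminant of the quadratic
   equation satisfied by e' when scales s and s' produce the same mixture cumulants. *)
Definition collision_discriminant (m c A s s' : R) : R :=
  m ^+ 2 * (s ^+ 2 + s * s' + s' ^+ 2) ^+ 2
  - (s + s') ^+ 2 * (4 * A + (c - 2) * (s ^+ 2 + s' ^+ 2)).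

Lemma quadratic_solvable (a b c : R) : a != 0 ->
  (exists y, a * y ^+ 2 + 2 * b * y + c = 0) <-> 0 <= b ^+ 2 - a * c.
Proof.
move=> a0.
have sqE y : a * (a * y ^+ 2 + 2 * b * y + c) = (a * y + b) ^+ 2 - (b ^+ 2 - a * c).
  by ring.
split => [[y y_root] | discr_ge0].
  by move/eqP: (sqE y); rewrite y_root mulr0 eq_sym subr_eq0 => /eqP <-; exact: sqr_ge0.
exists ((Num.sqrt (b ^+ 2 - a * c) - b) / a); apply: (mulfI a0).
by rewrite sqE mulr0 mulrC divfK // subrK sqr_sqrtr // subrr.
Qed.

Lemma collision_iff (m c A s s' : R) : 0 < s -> s < s' -> s' ^+ 2 < A ->
  (exists e e', mixture_cumulants m c s (A - s ^+ 2) e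
                = mixture_cumulants m c s' (A - s' ^+ 2) e')
  <-> 0 <= collision_discriminant m c A s s'.
Proof.
move=> s0 lt_ss' s'A.
pose v := A - s ^+ 2; pose v' := A - s' ^+ 2.
have v'0 : 0 < v' by rewrite subr_gt0.
have lt_v'v : v' < v by rewrite ltrD2l ltrN2 ltrXn2r // ltW.
have v0 : 0 < v by apply: lt_trans lt_v'v.
have [v_neq0 v'_neq0] : v != 0 /\ v' != 0 by rewrite !lt0r_neq0.
pose d := m * (s' ^+ 3 - s ^+ 3).
pose Q := (- 2 * v' ^+ 2 + c * s' ^+ 4) - (- 2 * v ^+ 2 + c * s ^+ 4).
pose b := d * v'; pose c0 := d ^+ 2 * v' - v * v' * Q.
have quadE e' : (v' - v) * e' ^+ 2 + 2 * b * e' + c0 =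
    v * v' * ((e' + d) ^+ 2 / v - 2 * v ^+ 2 + c * s ^+ 4
              - (e' ^+ 2 / v' - 2 * v' ^+ 2 + c * s' ^+ 4)).
  by rewrite /b /c0 /Q; field; rewrite v_neq0 v'_neq0.
have discrE : b ^+ 2 - (v' - v) * c0
    = v * v' * (s' - s) ^+ 2 * collision_discriminant m c A s s'.
  by rewrite /b /c0 /Q /d /v /v' /collision_discriminant; ring.
have coef_gt0 : 0 < v * v' * (s' - s) ^+ 2 by rewrite !mulr_gt0 // subr_gt0.
rewrite -(pmulr_rge0 _ coef_gt0) -discrE -quadratic_solvable ?subr_eq0 ?lt_eqF //.
split=> [[e [e'] [_ k3_eq k4_eq]] | [e' root_e']].
  exists e'; rewrite quadE (_ : e' + d = e); last by rewrite /d; lra.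
  by rewrite k4_eq subrr mulr0.
exists (e' + d), e'; congr (_, _, _); first by rewrite !subrK.
  by rewrite /d; ring.
by move/eqP: root_e'; rewrite quadE !mulf_eq0 (negPf v_neq0) (negPf v'_neq0) subr_eq0 => /eqP.
Qed.

Lemma collision_discriminant_lt0 (m c A s s' : R) : 9 / 8 * m ^+ 2 <= c ->
    0 < s -> 0 < s' -> s ^+ 2 < A -> s' ^+ 2 < A ->
  collision_discriminant m c A s s' < 0.
Proof.
move=> hc s0 s'0 sA s'A; rewrite /collision_discriminant.
set X := s ^+ 2 + s * s' + s' ^+ 2; set S := s ^+ 2 + s' ^+ 2; set T := (s + s') ^+ 2.
have T0 : 0 < T by rewrite exprn_gt0 ?addr_gt0.
(* This is where the constant 9/8 comes from. *)
have XST : 8 * X ^+ 2 <= 9 * S * T.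
  rewrite -subr_ge0 (_ : _ - _ = (s - s') ^+ 2 * (S + 4 * (s * s'))); last first.
    by rewrite /S /T /X; ring.
  by rewrite mulr_ge0 ?sqr_ge0 ?addr_ge0 ?mulr_ge0 ?sqr_ge0 ?ltW.
have mXST : m ^+ 2 * X ^+ 2 <= c * S * T.
  have ST0 : 0 <= S * T by rewrite mulr_ge0 ?(ltW T0) // addr_ge0 ?sqr_ge0.
  have := ler_wpM2l (sqr_ge0 m) XST; have := ler_wpM2r ST0 hc; lra.
have : 0 < T * (4 * A - 2 * S) by rewrite mulr_gt0 // /S; lra.
lra.
Qed.

Lemma collision_discriminant_ge0_witness (m c : R) : c < 9 / 8 * m ^+ 2 ->
  exists h, 0 < h < 1 /\ 0 <= collision_discriminant m c (1 + h) (1 - h) 1.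
Proof.
move=> hc; set eps := 9 / 8 * m ^+ 2 - c.
(* At h = 0 the discriminant is 8 eps > 0; h is taken small enough to keep it >= 0. *)
have eps0 : 0 < eps by rewrite subr_gt0.
have N0 : 0 < eps + m ^+ 2 + 8 by have := sqr_ge0 m; lra.
pose h := eps / (eps + m ^+ 2 + 8).
have h0 : 0 < h by rewrite divr_gt0.
have h1 : h < 1 by rewrite ltr_pdivrMr // mul1r; have := sqr_ge0 m; lra.
have h_eps : h * (m ^+ 2 + 8) <= eps.
  have : h * (eps + m ^+ 2 + 8) = eps by rewrite mulfVK ?lt0r_neq0.
  have : 0 <= h * eps by rewrite mulr_ge0 ?ltW.
  lra.
clearbody h; exists h; split; first by rewrite h0 h1.
rewrite /collision_discriminant.
set t := 1 - h; set X := t ^+ 2 + t * 1 + 1 ^+ 2; set T := (t + 1) ^+ 2.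
set L := 4 * (1 + h) + (c - 2) * (t ^+ 2 + 1 ^+ 2).
have X_ge : 3 / 4 * T <= X.
  by rewrite -subr_ge0 (_ : _ - _ = (t - 1) ^+ 2 / 4) ?divr_ge0 ?sqr_ge0 // /X /T; field.
have X2_ge : 9 / 16 * T ^+ 2 <= X ^+ 2.
  have T0 : 0 <= 3 / 4 * T by rewrite /T; have := sqr_ge0 (t + 1); lra.
  by have := ler_pM T0 T0 X_ge X_ge; lra.
have inner : 0 <= 9 / 16 * m ^+ 2 * T - L.
  rewrite (_ : _ - _ = eps * (h - 1) ^+ 2 + (eps - h * (m ^+ 2 + 8)) + 2 * h ^+ 2
                       + 9 / 16 * m ^+ 2 * (h * (1 - h)) + 7 / 16 * m ^+ 2 * h :> R);
    last first.
    by rewrite /L /T /t /eps; field.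
  have : 0 <= h * (1 - h) by rewrite mulr_ge0 ?subr_ge0 ?ltW.
  move/(mulr_ge0 (sqr_ge0 m)).
  have := mulr_ge0 (sqr_ge0 m) (ltW h0); have := mulr_ge0 (ltW eps0) (sqr_ge0 (h - 1)).
  have := sqr_ge0 h; lra.
have : m ^+ 2 * (9 / 16 * T ^+ 2) <= m ^+ 2 * X ^+ 2 by rewrite ler_wpM2l ?sqr_ge0.
have : 0 <= T * (9 / 16 * m ^+ 2 * T - L) by rewrite mulr_ge0 ?sqr_ge0.
lra.
Qed.

Lemma scale_identifiable_iff (m c : R) : scale_identifiable m c <-> 9 / 8 * m ^+ 2 <= c.
Proof.
split=> [ident | hc].
  rewrite leNgt; apply/negP => /collision_discriminant_ge0_witness [h [/andP[h0 h1] discr0]].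
  have s0 : 0 < 1 - h by rewrite subr_gt0.
  have lt_ss' : 1 - h < 1 by rewrite ltrBlDr ltrDl.
  have s'A : 1 ^+ 2 < 1 + h by rewrite expr1n ltrDl.
  have [e [e' same]] := (collision_iff m c s0 lt_ss' s'A).2 discr0.
  have v0 : 0 < 1 + h - (1 - h) ^+ 2 by nra.
  have v'0 : 0 < 1 + h - 1 ^+ 2 by rewrite expr1n addrC addKr.
  by have := ident _ _ _ _ _ _ s0 v0 ltr01 v'0 same; lra.
move=> s v e s' v' e' s0 v0 s'0 v'0 same.
wlog le_ss' : s v e s' v' e' s0 v0 s'0 v'0 same / s <= s'.
  move=> sym; case: (lerP s s') => [le_ss' | /ltW le_s's]; first exact: (sym s v e s' v' e').
  by apply/esym/(sym s' v' e' s v e); rewrite // -same.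
rewrite le_eqVlt in le_ss'; case/predU1P: le_ss' => // lt_ss'; exfalso.
case: (same) => A_eq _ _; set A := v + s ^+ 2 in A_eq.
have vE : v = A - s ^+ 2 by rewrite addrK.
have v'E : v' = A - s' ^+ 2 by rewrite A_eq addrK.
have [sA s'A] : s ^+ 2 < A /\ s' ^+ 2 < A by split; rewrite -subr_gt0 -?vE -?v'E.
have := collision_discriminant_lt0 hc s0 s'0 sA s'A; rewrite ltNge => /negP; apply.
apply/(collision_iff m c s0 lt_ss' s'A); exists e, e'.
by rewrite -vE -v'E.
Qed.

End ScaleIdentifiability.

Section Kernel.
Variables (R : realType) (K : R -> R).
Hypothesis K_normalized : normalized K.

Lemma Delta_cumulants (u s : R) (j : nat) : (j < 5)%N ->
  Delta K j u s = moment_of_cumulants u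
    (s ^+ 2, kmoment K 3 * s ^+ 3, (kmoment K 4 - 3) * s ^+ 4) j.
Proof.
case: K_normalized => m0 [m1 m2].
rewrite /Delta; case: j => [|[|[|[|[|]]]]] //= _;
  rewrite !big_ord_recr big_ord0 /= m0 ?m1 ?m2 /binomial /=; ring.
Qed.

Lemma Mmap_cumulants (w1 u1 w2 u2 s : R) (j : nat) :
    0 < w1 -> 0 < w2 -> u1 < u2 -> (j < 5)%N ->
  Mmap K (w1, u1, w2, u2, s) j
  = (w1 + w2) * moment_of_cumulants (two_point_mean w1 u1 w2 u2)
      (mixture_cumulants (kmoment K 3) (kmoment K 4 - 3) s
         (two_point_var w1 u1 w2 u2) (two_point_cum3 w1 u1 w2 u2)) j.
Proof.
by move=> w10 w20 u12 j5; rewrite /Mmap !Delta_cumulants // two_point_mixture_moments.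
Qed.

Lemma injective_on_Omega_iff :
  injective_on_Omega K <-> scale_identifiable (kmoment K 3) (kmoment K 4 - 3).
Proof.
split=> [inj | ident].
  move=> s v e s' v' e' s0 v0 s'0 v'0 same.
  have [w1 [u1 [w2 [u2 [[w10 w20 u12] [W1 mean0 var_v cum3_e]]]]]] := two_point_realize e v0.
  have [w1' [u1' [w2' [u2' [[w10' w20' u12'] [W1' mean0' var_v' cum3_e']]]]]] :=
    two_point_realize e' v'0.
  suff [] : (w1, u1, w2, u2, s) = (w1', u1', w2', u2', s') by [].
  apply: inj => [| | j]; rewrite /Omega; [by do !split | by do !split |].
  rewrite !Mmap_cumulants //.
  by rewrite W1 W1' mean0 mean0' var_v var_v' cum3_e cum3_e' same.
move=> [[[[w1 u1] w2] u2] s] [[[[w1' u1'] w2'] u2'] s'] /=.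
move=> [w10 [w20 [u12 s0]]] [w10' [w20' [u12' s'0]]] eqM.
have W0 : w1 + w2 != 0 by rewrite lt0r_neq0 ?addr_gt0.
have [W_eq mean_eq cum_eq] := moment_of_cumulants_inj W0 (fun j j5 =>
  etrans (esym (Mmap_cumulants s w10 w20 u12 j5))
         (etrans (eqM (Ordinal j5)) (Mmap_cumulants s' w10' w20' u12' j5))).
have s_eq := ident _ _ _ _ _ _ s0 (two_point_var_gt0 w10 w20 u12)
                               s'0 (two_point_var_gt0 w10' w20' u12') cum_eq.
subst s'; case: cum_eq => /addIr var_eq /addIr cum3_eq _.
congr (_, s).
by rewrite -(two_point_ofK w10 w20 u12) -(two_point_ofK w10' w20' u12')
           W_eq mean_eq var_eq cum3_eq.
Qed.

End Kernel.

Theorem corollary2p6 (R : realType) (K : R -> R) :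
  is_kernel K -> normalized K ->
  (injective_on_Omega K <->
   3 + 9 / 8 * kmoment K 3 ^+ 2 <= kmoment K 4).
Proof.
move=> _ K_normalized.
rewrite injective_on_Omega_iff // scale_identifiable_iff.
by split=> ?; lra.
Qed.
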